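(* Let $n>3$ be real, let $m=1/2$, and let $K=K(1/2)=\int_0^{\pi/2}\bigl(1-\tfrac12\sin^2\theta\bigr)^{-1/2}\,d\theta$. Define $g:\mathbb R\to\mathbb R$ by $g(x)=\operatorname{cn}(x,1/2)^n$ for $x\in[-K,K]$ and $g(x)=0$ otherwise. Then $g$ is of class $C^3$ on $\mathbb R$ and satisfies $$n\,g'''(x)\,g(x)^2-3n\,g''(x)\,g'(x)\,g(x)+2\left(n-\tfrac1n\right)g'(x)^3=0\qquad\text{for all }x\in\mathbb R.$$ Consequently, for any constants $\alpha\neq 0,\beta,\gamma,\delta\in\mathbb R$, the function $Y(x)=\gamma\int_{-\infty}^{x}g(\alpha t+\beta)\,dt+\delta$ is a $C^4$ solution on $\mathbb R$ of $Y''''(Y')^2-3Y'''Y''Y'+2(1-n^{-2})(Y'')^3=0$.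
   Context: $\operatorname{sn}(x,m),\operatorname{cn}(x,m),\operatorname{dn}(x,m)$ denote the Jacobian elliptic functions with parameter $m\in[0,1)$; they satisfy $\operatorname{sn}'=\operatorname{cn}\operatorname{dn}$, $\operatorname{cn}'=-\operatorname{sn}\operatorname{dn}$, $\operatorname{dn}'=-m\operatorname{sn}\operatorname{cn}$, $\operatorname{sn}^2+\operatorname{cn}^2=1$, $\operatorname{dn}^2+m\operatorname{sn}^2=1$, with $\operatorname{cn}(0,m)=1$, $\operatorname{sn}(0,m)=0$. $K(m)$ is the complete elliptic integral of the first kind; $\operatorname{cn}(x,m)>0$ for $|x|<K(m)$ and $\operatorname{cn}(\pm K(m),m)=0$. *)

From Stdlib Require Import Reals Lra ClassicalEpsilon.
From Coquelicot Require Import Coquelicot.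
Open Scope R_scope.

Definition ellF (m phi : R) : R :=
  RInt (fun t => / sqrt (1 - m * (sin t) ^ 2)) 0 phi.

Definition ellK (m : R) : R := ellF m (PI / 2).

(* Jacobi amplitude am(x | m): the (unique, for 0 <= m < 1) phi with
   F(phi | m) = x; chosen by Hilbert's epsilon. *)
Definition jam (m x : R) : R :=
  epsilon (inhabits 0) (fun phi => ellF m phi = x).

Definition jsn (m x : R) : R := sin (jam m x).
Definition jcn (m x : R) : R := cos (jam m x).
Definition jdn (m x : R) : R := sqrt (1 - m * (jsn m x) ^ 2).

Definition rpow (x a : R) : R := if Rlt_dec 0 x then Rpower x a else 0.

Definition Ck (k : nat) (f : R -> R) : Prop :=
  (forall j, (j <= k)%nat -> forall x, ex_derive_n f j x) /\
  (forall x, continuous (Derive_n f k) x).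

Definition gfun (n : R) (x : R) : R :=
  if Rle_dec (Rabs x) (ellK (1/2)) then rpow (jcn (1/2) x) n else 0.

From Stdlib Require Import Reals Ranalysis5 Lra Lia ClassicalEpsilon FunctionalExtensionality.
From Coquelicot Require Import Coquelicot.
Open Scope R_scope.

(* Inverting the elliptic integral gives [am' = dn], hence [sn' = cn dn],
   [cn' = - sn dn] and [dn' = - m sn cn]. On (-K, K), where [cn > 0], the first
   three derivatives of [cn^n] are [cn^(n-3)] times polynomials in [cn], [sn], [dn],
   and for m = 1/2 the ODE reduces to a polynomial identity via [sn^2 = 1 - cn^2]
   and [dn^2 = (1 + cn^2) / 2]. As n > 3, the factor [cn^(n-3)] vanishes at [±K], so
   these derivatives extended by zero outside [-K, K] still form a chain of
   derivatives on R (at [±K] by the mean value theorem). Y is a primitive of g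
   composed with an affine map, so its derivatives are
   [gamma alpha^k g^(k) (alpha x + beta)] and its ODE is a rescaling of that of g. *)

Lemma continuous_of_is_derive (f : R -> R) x l : is_derive f x l -> continuous f x.
Proof.
  intros Hf. apply (ex_derive_continuous (K := R_AbsRing) (V := R_NormedModule)).
  now exists l.
Qed.

Lemma continuity_pt_of_ex_derive (f : R -> R) x : ex_derive f x -> continuity_pt f x.
Proof. intros [l Hf]. apply continuity_pt_filterlim, (continuous_of_is_derive _ _ _ Hf). Qed.

Lemma continuity_pt_of_is_derive (f : R -> R) x l : is_derive f x l -> continuity_pt f x.
Proof. intros Hf. apply continuity_pt_of_ex_derive. now exists l. Qed.

Lemma locally_interval x c d : c < x < d -> locally x (fun y => c < y < d).
Proof. intros H. apply (open_and _ _ (open_gt c) (open_lt d)), H. Qed.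

Lemma rpow_pos c a : 0 < c -> rpow c a = Rpower c a.
Proof. intros Hc. unfold rpow. now destruct (Rlt_dec 0 c). Qed.

Lemma rpow_nonpos c a : c <= 0 -> rpow c a = 0.
Proof. intros Hc. unfold rpow. destruct (Rlt_dec 0 c); [lra | reflexivity]. Qed.

Lemma rpow_add_nat c a k : rpow c (a + INR k) = rpow c a * c ^ k.
Proof.
  destruct (Rlt_dec 0 c) as [Hc|Hc].
  - rewrite !rpow_pos, Rpower_plus, Rpower_pow by exact Hc. reflexivity.
  - rewrite !rpow_nonpos by lra. ring.
Qed.

Lemma is_derive_rpow c a : 0 < c -> is_derive (fun t => rpow t a) c (a * rpow c (a - 1)).
Proof.
  intros Hc. rewrite rpow_pos by exact Hc.
  apply (is_derive_ext_loc (fun t => Rpower t a)).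
  - apply (filter_imp (fun t => 0 < t < c + 1)); [|apply locally_interval; lra].
    intros t Ht. symmetry. apply rpow_pos. lra.
  - apply is_derive_Reals, derivable_pt_lim_power, Hc.
Qed.

Lemma ex_derive_rpow c a : 0 < c -> ex_derive (fun t => rpow t a) c.
Proof. intros Hc. eexists. now apply is_derive_rpow. Qed.

Lemma continuity_pt_rpow a c : 0 < a -> continuity_pt (fun t => rpow t a) c.
Proof.
  intros Ha. destruct (Rtotal_order c 0) as [Hc|[->|Hc]].
  - apply continuity_pt_filterlim, (continuous_ext_loc (fun t => rpow t a) (fun _ => 0)).
    + apply (filter_imp (fun t => c - 1 < t < 0)); [|apply locally_interval; lra].
      intros t Ht. symmetry. apply rpow_nonpos. lra.
    + apply continuous_const.
  - apply continuity_pt_locally. intros eps.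
    assert (Hdelta : 0 < Rpower eps (/ a)) by apply exp_pos.
    exists (mkposreal _ Hdelta). intros t Ht.
    change (Rabs (t - 0) < Rpower eps (/ a)) in Ht. rewrite Rminus_0_r in Ht.
    rewrite (rpow_nonpos 0), Rminus_0_r by lra.
    destruct (Rle_dec t 0) as [Ht0|Ht0].
    + rewrite rpow_nonpos, Rabs_R0 by lra. apply cond_pos.
    + rewrite rpow_pos, Rabs_right by (try (left; apply exp_pos); lra).
      rewrite Rabs_right in Ht by lra.
      replace (pos eps) with (Rpower (Rpower eps (/ a)) a)
        by (rewrite Rpower_mult, Rinv_l, Rpower_1; [reflexivity | apply cond_pos | lra]).
      apply Rlt_Rpower_l; lra.
  - apply continuity_pt_filterlim, (continuous_ext_loc (fun t => rpow t a) (fun t => Rpower t a)).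
    + apply (filter_imp (fun t => 0 < t < c + 1)); [|apply locally_interval; lra].
      intros t Ht. symmetry. apply rpow_pos. lra.
    + eapply continuous_of_is_derive, is_derive_Reals, derivable_pt_lim_power, Hc.
Qed.

Section Amplitude.

Variable m : R.
Hypothesis hm : 0 <= m < 1.

Definition elldelta (t : R) : R := sqrt (1 - m * sin t ^ 2).

Lemma elldelta_rad_pos t : 0 < 1 - m * sin t ^ 2.
Proof.
  assert (sin t ^ 2 <= 1) by (pose proof (SIN_bound t); nra). nra.
Qed.

Lemma elldelta_pos t : 0 < elldelta t.
Proof. apply sqrt_lt_R0, elldelta_rad_pos. Qed.

Lemma elldelta_le1 t : elldelta t <= 1.
Proof.
  rewrite <- sqrt_1. apply sqrt_le_1_alt.
  pose proof (pow2_ge_0 (sin t)). nra.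
Qed.

Lemma is_derive_elldelta t : is_derive elldelta t (- m * sin t * cos t / elldelta t).
Proof.
  pose proof (elldelta_pos t) as Hd. unfold elldelta in *.
  auto_derive; [apply elldelta_rad_pos|].
  replace (1 + - (m * (sin t * (sin t * 1)))) with (1 - m * sin t ^ 2) by ring.
  field. lra.
Qed.

Lemma continuous_inv_elldelta t : continuous (fun t => / elldelta t) t.
Proof.
  eapply continuous_of_is_derive.
  apply (is_derive_inv elldelta); [apply is_derive_elldelta|].
  apply Rgt_not_eq, elldelta_pos.
Qed.

Lemma ex_RInt_inv_elldelta a b : ex_RInt (fun t => / elldelta t) a b.
Proof.
  apply (ex_RInt_continuous (V := R_CompleteNormedModule)).
  intros t _. apply continuous_inv_elldelta.
Qed.

Lemma is_derive_ellF phi : is_derive (ellF m) phi (/ elldelta phi).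
Proof.
  apply (is_derive_RInt (fun t => / elldelta t) (ellF m) 0).
  - exists (mkposreal 1 Rlt_0_1). intros y _.
    apply (RInt_correct (V := R_CompleteNormedModule)), ex_RInt_inv_elldelta.
  - apply continuous_inv_elldelta.
Qed.

Lemma ellF_0 : ellF m 0 = 0.
Proof. apply (RInt_point (V := R_CompleteNormedModule)). Qed.

Lemma elldelta_opp t : elldelta (- t) = elldelta t.
Proof. unfold elldelta. rewrite sin_neg. f_equal. ring. Qed.

Lemma ellF_opp phi : ellF m (- phi) = - ellF m phi.
Proof.
  change (RInt (fun t => / elldelta t) 0 (- phi) = - RInt (fun t => / elldelta t) 0 phi).
  assert (Hlin := RInt_comp_lin (V := R_CompleteNormedModule)
                    (fun t => / elldelta t) (-1) 0 0 phi (ex_RInt_inv_elldelta _ _)).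
  replace (-1 * 0 + 0) with 0 in Hlin by ring.
  replace (-1 * phi + 0) with (- phi) in Hlin by ring.
  rewrite <- Hlin, (RInt_ext _ (fun t => scal (-1) (/ elldelta t))).
  - rewrite (RInt_scal (V := R_CompleteNormedModule)) by apply ex_RInt_inv_elldelta.
    change ((-1) * RInt (fun t => / elldelta t) 0 phi = - RInt (fun t => / elldelta t) 0 phi). ring.
  - intros t _. now replace (-1 * t + 0) with (- t) by ring; rewrite elldelta_opp.
Qed.

Lemma continuity_pt_ellF phi : continuity_pt (ellF m) phi.
Proof. exact (continuity_pt_of_is_derive _ _ _ (is_derive_ellF phi)). Qed.

(* The integrand [/ elldelta] is at least 1 since [m >= 0]. *)
Lemma ellF_sub_ge a b : a <= b -> b - a <= ellF m b - ellF m a.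
Proof.
  intros Hab.
  destruct (MVT_gen (ellF m) a b (fun t => / elldelta t)) as [c [_ Hc]].
  - intros; apply is_derive_ellF.
  - intros; apply continuity_pt_ellF.
  - rewrite Hc. assert (1 <= / elldelta c).
    { pose proof (elldelta_pos c). pose proof (elldelta_le1 c).
      rewrite <- Rinv_1. apply Rinv_le_contravar; lra. }
    nra.
Qed.

Lemma ellF_inj a b : ellF m a = ellF m b -> a = b.
Proof.
  intros Heq. pose proof (ellF_sub_ge a b). pose proof (ellF_sub_ge b a).
  destruct (Rle_dec a b); lra.
Qed.

Lemma ellF_surj x : exists phi, ellF m phi = x.
Proof.
  pose proof (ellF_sub_ge 0 (Rabs x) (Rabs_pos x)) as Hup.
  pose proof (ellF_sub_ge (- Rabs x) 0 ltac:(pose proof (Rabs_pos x); lra)) as Hlo.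
  rewrite ellF_0 in Hup, Hlo.
  pose proof (Rle_abs x). pose proof (Rabs_maj2 x).
  destruct (IVT_cor (fun phi => ellF m phi - x) (- Rabs x) (Rabs x)) as [phi [_ Hphi]].
  - intro t. apply continuity_pt_minus; [apply continuity_pt_ellF | apply continuity_pt_const].
    now intros u v.
  - pose proof (Rabs_pos x); lra.
  - assert (ellF m (- Rabs x) - x <= 0) by lra. assert (0 <= ellF m (Rabs x) - x) by lra. nra.
  - exists phi. lra.
Qed.

Lemma ellF_jam x : ellF m (jam m x) = x.
Proof.
  destruct (ellF_surj x) as [phi Hphi].
  apply (epsilon_spec (inhabits 0) (fun phi => ellF m phi = x)). now exists phi.
Qed.

Lemma jam_ellF phi : jam m (ellF m phi) = phi.
Proof. apply ellF_inj. apply ellF_jam. Qed.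

Lemma jam_sub_le x y : x <= y -> 0 <= jam m y - jam m x <= y - x.
Proof.
  intros Hxy. pose proof (ellF_sub_ge (jam m x) (jam m y)) as H1.
  pose proof (ellF_sub_ge (jam m y) (jam m x)) as H2.
  rewrite !ellF_jam in H1, H2. destruct (Rle_dec (jam m x) (jam m y)); lra.
Qed.

Lemma jam_lt x y : x < y -> jam m x < jam m y.
Proof.
  intros Hxy. destruct (jam_sub_le x y) as [H _]; [lra|].
  destruct H as [|Heq]; [lra|].
  assert (Hxy' : jam m y = jam m x) by lra.
  apply (f_equal (ellF m)) in Hxy'. rewrite !ellF_jam in Hxy'. lra.
Qed.

Lemma continuity_pt_jam x : continuity_pt (jam m) x.
Proof.
  apply continuity_pt_locally. intros eps. exists eps. intros y Hy.
  change (Rabs (y - x) < eps) in Hy. change (Rabs (jam m y - jam m x) < eps).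
  eapply Rle_lt_trans; [|exact Hy].
  destruct (Rle_dec x y) as [Hxy|Hxy].
  - pose proof (jam_sub_le x y Hxy). rewrite !Rabs_right; lra.
  - pose proof (jam_sub_le y x ltac:(lra)). rewrite Rabs_left1, Rabs_left1; lra.
Qed.

Lemma jdn_elldelta x : jdn m x = elldelta (jam m x).
Proof. reflexivity. Qed.

Lemma is_derive_jam x : is_derive (jam m) x (jdn m x).
Proof.
  assert (Hder : forall a, derivable_pt (ellF m) a).
  { intro a. apply ex_derive_Reals_0. eexists. apply is_derive_ellF. }
  assert (Hmono : jam m (x - 1) <= jam m x <= jam m (x + 1)).
  { split; left; apply jam_lt; lra. }
  apply is_derive_Reals.
  assert (Hrecip := derivable_pt_lim_recip_interv (ellF m) (jam m) (x - 1) (x + 1) x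
                      (fun a _ => Hder a) (continuity_pt_jam x) ltac:(lra) ltac:(lra)
                      Hmono (fun y _ => ellF_jam y)).
  rewrite (derive_pt_eq_0 _ _ (/ elldelta (jam m x))) in Hrecip
    by apply is_derive_Reals, is_derive_ellF.
  rewrite jdn_elldelta.
  pose proof (elldelta_pos (jam m x)).
  replace (elldelta (jam m x)) with (1 / / elldelta (jam m x)) by (field; lra).
  apply Hrecip. apply Rinv_neq_0_compat. lra.
Qed.

Lemma is_derive_jsn x : is_derive (jsn m) x (jcn m x * jdn m x).
Proof.
  rewrite Rmult_comm. apply (is_derive_comp sin (jam m)); [|apply is_derive_jam].
  apply is_derive_Reals, derivable_pt_lim_sin.
Qed.

Lemma is_derive_jcn x : is_derive (jcn m) x (- jsn m x * jdn m x).
Proof.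
  replace (- jsn m x * jdn m x) with (jdn m x * - sin (jam m x)) by (unfold jsn; ring).
  apply (is_derive_comp cos (jam m)); [|apply is_derive_jam].
  apply is_derive_Reals, derivable_pt_lim_cos.
Qed.

Lemma is_derive_jdn x : is_derive (jdn m) x (- m * jsn m x * jcn m x).
Proof.
  pose proof (elldelta_pos (jam m x)).
  replace (- m * jsn m x * jcn m x)
    with (jdn m x * (- m * sin (jam m x) * cos (jam m x) / elldelta (jam m x)))
    by (rewrite jdn_elldelta; unfold jsn, jcn; field; lra).
  apply (is_derive_comp elldelta (jam m)); [apply is_derive_elldelta | apply is_derive_jam].
Qed.

Lemma jsn2_add_jcn2 x : jsn m x ^ 2 + jcn m x ^ 2 = 1.
Proof. unfold jsn, jcn. rewrite <- (sin2_cos2 (jam m x)). unfold Rsqr. ring. Qed.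

Lemma jdn2 x : jdn m x ^ 2 = 1 - m * jsn m x ^ 2.
Proof. apply pow2_sqrt. left. apply elldelta_rad_pos. Qed.

Lemma ellK_pos : 0 < ellK m.
Proof.
  pose proof (ellF_sub_ge 0 (PI / 2)) as H. rewrite ellF_0 in H.
  pose proof PI2_RGT_0. unfold ellK. lra.
Qed.

Lemma jam_ellK : jam m (ellK m) = PI / 2.
Proof. apply jam_ellF. Qed.

Lemma jam_opp_ellK : jam m (- ellK m) = - (PI / 2).
Proof. unfold ellK. rewrite <- ellF_opp. apply jam_ellF. Qed.

Lemma jcn_ellK : jcn m (ellK m) = 0 /\ jcn m (- ellK m) = 0.
Proof. unfold jcn. rewrite jam_ellK, jam_opp_ellK, cos_neg, cos_PI2. now split. Qed.

Lemma jcn_pos x : - ellK m < x < ellK m -> 0 < jcn m x.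
Proof.
  intros [Hlo Hhi]. apply cos_gt_0.
  - rewrite <- jam_opp_ellK. now apply jam_lt.
  - rewrite <- jam_ellK. now apply jam_lt.
Qed.

Lemma ex_derive_jsn x : ex_derive (jsn m) x.
Proof. eexists. apply is_derive_jsn. Qed.

Lemma ex_derive_jcn x : ex_derive (jcn m) x.
Proof. eexists. apply is_derive_jcn. Qed.

Lemma ex_derive_jdn x : ex_derive (jdn m) x.
Proof. eexists. apply is_derive_jdn. Qed.

End Amplitude.

Lemma continuity_pt_of_vanishing (G F : R -> R) p :
  continuity_pt F p -> F p = 0 -> G p = 0 -> (forall y, G y = F y \/ G y = 0) ->
  continuity_pt G p.
Proof.
  intros HF HFp HGp HGF. apply continuity_pt_locally. intros eps.
  destruct (proj1 (continuity_pt_locally _ _) HF eps) as [d Hd].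
  exists d. intros y Hy. rewrite HGp. specialize (Hd y Hy). rewrite HFp in Hd.
  destruct (HGF y) as [-> | ->]; [exact Hd|].
  rewrite Rminus_0_r, Rabs_R0. apply cond_pos.
Qed.

Lemma is_derive_0_of_mean_value (G F1 : R -> R) p :
  continuity_pt F1 p -> F1 p = 0 -> G p = 0 ->
  (forall y, exists c, Rabs (c - p) <= Rabs (y - p) /\ G y = F1 c * (y - p)) ->
  is_derive G p 0.
Proof.
  intros HF1 HF1p HGp Hmv. apply is_derive_Reals. intros eps Heps.
  destruct (proj1 (continuity_pt_locally _ _) HF1 (mkposreal eps Heps)) as [d Hd].
  exists d. intros h Hh0 Hh.
  destruct (Hmv (p + h)) as [c [Hc HGc]].
  replace (p + h - p) with h in Hc, HGc by ring.
  rewrite HGc, HGp.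
  replace ((F1 c * h - 0) / h - 0) with (F1 c - F1 p) by (rewrite HF1p; field; auto).
  apply Hd. exact (Rle_lt_trans _ _ _ Hc Hh).
Qed.

Definition zero_ext (a b : R) (F : R -> R) (x : R) : R :=
  if Rlt_dec a x then if Rlt_dec x b then F x else 0 else 0.

Lemma zero_ext_in a b F x : a < x < b -> zero_ext a b F x = F x.
Proof.
  intros [Ha Hb]. unfold zero_ext.
  destruct (Rlt_dec a x); [|lra]. destruct (Rlt_dec x b); lra.
Qed.

Lemma zero_ext_out a b F x : x <= a \/ b <= x -> zero_ext a b F x = 0.
Proof.
  intros Hx. unfold zero_ext.
  destruct (Rlt_dec a x); [destruct (Rlt_dec x b)|]; auto; lra.
Qed.

Lemma zero_ext_cases a b F x : zero_ext a b F x = F x \/ zero_ext a b F x = 0.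
Proof. unfold zero_ext. destruct (Rlt_dec a x); [destruct (Rlt_dec x b)|]; auto. Qed.

Section ZeroExtension.

Variables (a b : R) (F : R -> R).
Hypothesis hab : a < b.
Hypothesis hF : forall x, a <= x <= b -> continuity_pt F x.
Hypotheses (hFa : F a = 0) (hFb : F b = 0).

Lemma zero_ext_locally_in x : a < x < b -> locally x (fun y => F y = zero_ext a b F y).
Proof.
  intros Hx. apply (filter_imp (fun y => a < y < b)); [|now apply locally_interval].
  intros y Hy. now rewrite zero_ext_in.
Qed.

Lemma zero_ext_locally_out x : x < a \/ b < x -> locally x (fun y => 0 = zero_ext a b F y).
Proof.
  intros [Hx|Hx].
  - apply (filter_imp (fun y => x - 1 < y < a)); [|apply locally_interval; lra].
    intros y Hy. rewrite zero_ext_out; lra.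
  - apply (filter_imp (fun y => b < y < x + 1)); [|apply locally_interval; lra].
    intros y Hy. rewrite zero_ext_out; lra.
Qed.

Lemma continuity_pt_zero_ext x : continuity_pt (zero_ext a b F) x.
Proof.
  destruct (Rtotal_order x a) as [Hx|[->|Hx]];
    [ | | destruct (Rtotal_order x b) as [Hx'|[->|Hx']]].
  - apply continuity_pt_filterlim, (continuous_ext_loc _ (fun _ => 0)).
    + apply zero_ext_locally_out. now left.
    + apply continuous_const.
  - apply (continuity_pt_of_vanishing _ F); auto using zero_ext_cases.
    + apply hF. lra.
    + apply zero_ext_out. lra.
  - apply continuity_pt_filterlim, (continuous_ext_loc _ F).
    + apply zero_ext_locally_in. lra.
    + apply continuity_pt_filterlim, hF. lra.
  - apply (continuity_pt_of_vanishing _ F); auto using zero_ext_cases.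
    + apply hF. lra.
    + apply zero_ext_out. lra.
  - apply continuity_pt_filterlim, (continuous_ext_loc _ (fun _ => 0)).
    + apply zero_ext_locally_out. now right.
    + apply continuous_const.
Qed.

Variable F1 : R -> R.
Hypotheses (hF1a : continuity_pt F1 a) (hF1b : continuity_pt F1 b).
Hypotheses (hF1a0 : F1 a = 0) (hF1b0 : F1 b = 0).
Hypothesis hFF1 : forall x, a < x < b -> is_derive F x (F1 x).

Lemma zero_ext_mean_value p : p = a \/ p = b ->
  forall y, exists c, Rabs (c - p) <= Rabs (y - p) /\ zero_ext a b F y = F1 c * (y - p).
Proof.
  intros Hp y.
  assert (HF1p : F1 p = 0) by now destruct Hp as [-> | ->].
  assert (HFp : F p = 0) by now destruct Hp as [-> | ->].
  destruct (Rlt_dec a y) as [Hay|Hay]; [destruct (Rlt_dec y b) as [Hyb|Hyb]|].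
  2, 3: exists p; rewrite zero_ext_out, HF1p by lra;
        split; [rewrite Rminus_diag, Rabs_R0; apply Rabs_pos | ring].
  assert (Hseg : a <= Rmin p y /\ Rmax p y <= b) by (unfold Rmin, Rmax;
    destruct (Rle_dec p y), Hp; lra).
  destruct (MVT_gen F p y F1) as [c [Hc HFc]].
  - intros t Ht. apply hFF1. lra.
  - intros t Ht. apply hF. lra.
  - exists c. split.
    + revert Hc. unfold Rmin, Rmax, Rabs.
      destruct (Rle_dec p y), (Rcase_abs (c - p)), (Rcase_abs (y - p)); lra.
    + rewrite zero_ext_in, <- HFc, HFp by lra. ring.
Qed.

Lemma is_derive_zero_ext x : is_derive (zero_ext a b F) x (zero_ext a b F1 x).
Proof.
  destruct (Rtotal_order x a) as [Hx|[->|Hx]];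
    [ | | destruct (Rtotal_order x b) as [Hx'|[->|Hx']]].
  - rewrite zero_ext_out by lra. apply (is_derive_ext_loc (fun _ => 0)).
    + apply zero_ext_locally_out. now left.
    + apply is_derive_Reals, derivable_pt_lim_const.
  - rewrite zero_ext_out by lra. apply is_derive_0_of_mean_value with F1; auto.
    + apply zero_ext_out. lra.
    + apply zero_ext_mean_value. now left.
  - rewrite zero_ext_in by lra. apply (is_derive_ext_loc F).
    + apply zero_ext_locally_in. lra.
    + apply hFF1. lra.
  - rewrite zero_ext_out by lra. apply is_derive_0_of_mean_value with F1; auto.
    + apply zero_ext_out. lra.
    + apply zero_ext_mean_value. now right.
  - rewrite zero_ext_out by lra. apply (is_derive_ext_loc (fun _ => 0)).
    + apply zero_ext_locally_out. now right.
    + apply is_derive_Reals, derivable_pt_lim_const.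
Qed.

End ZeroExtension.

Lemma Derive_eq_of_is_derive (f f' : R -> R) :
  (forall x, is_derive f x (f' x)) -> Derive f = f'.
Proof. intros Hf. apply functional_extensionality. intros x. apply is_derive_unique, Hf. Qed.

Section DerivativeChain.

Variables (f : nat -> R -> R) (N : nat).
Hypothesis hf : forall k x, (k < N)%nat -> is_derive (f k) x (f (S k) x).

Lemma Derive_n_chain k : (k <= N)%nat -> Derive_n (f 0%nat) k = f k.
Proof.
  induction k as [|k IHk]; intros Hk; [reflexivity|].
  simpl. rewrite IHk by lia. apply Derive_eq_of_is_derive. intros x. apply hf. lia.
Qed.

Lemma Ck_chain : (forall x, continuous (f N) x) -> Ck N (f 0%nat).
Proof.
  intros Hcont. split; [|now rewrite Derive_n_chain].
  intros [|j] Hj x; [exact I|].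
  simpl. rewrite Derive_n_chain by lia. eexists. apply hf. lia.
Qed.

End DerivativeChain.

Lemma continuity_pt_comp_affine (h : R -> R) a b x :
  continuity_pt h (a * x + b) -> continuity_pt (fun y => h (a * y + b)) x.
Proof.
  apply (continuity_pt_comp (fun y => a * y + b) h).
  apply (continuity_pt_of_is_derive _ _ a). auto_derive; [exact I | ring].
Qed.

Lemma RInt_gen_m_infty_of_vanishing (f : R -> R) t0 x :
  (forall a b, ex_RInt f a b) -> (forall t, t < t0 -> f t = 0) ->
  RInt_gen f (Rbar_locally m_infty) (at_point x) = RInt f t0 x.
Proof.
  intros Hint Hzero. apply is_RInt_gen_unique.
  apply (filterlimi_lim_ext_loc (fun _ => RInt f t0 x)); [|apply filterlim_const].
  apply (Filter_prod _ _ _ (fun a => a < t0) (fun b => b = x)); [now exists t0 | reflexivity|].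
  intros a b Ha ->. simpl.
  replace (RInt f t0 x) with (RInt f a x).
  { apply (RInt_correct (V := R_CompleteNormedModule)), Hint. }
  rewrite <- (RInt_Chasles (V := R_CompleteNormedModule) f a t0 x) by auto.
  rewrite (RInt_ext (V := R_CompleteNormedModule) f (fun _ => 0) a t0), RInt_const.
  - change ((t0 - a) * 0 + RInt f t0 x = RInt f t0 x). ring.
  - intros t Ht. rewrite Rmax_right in Ht by lra. apply Hzero. lra.
Qed.

Lemma is_derive_scal_affine (h : R -> R) c a b x l :
  is_derive h (a * x + b) l -> is_derive (fun y => c * h (a * y + b)) x (c * a * l).
Proof.
  intros Hh. rewrite Rmult_assoc. apply is_derive_Reals, derivable_pt_lim_scal, is_derive_Reals.
  apply (is_derive_comp h (fun y => a * y + b)); [exact Hh|].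
  auto_derive; [exact I | ring].
Qed.

Section AffinePrimitive.

Variables (g : nat -> R -> R) (N : nat) (a b c d t0 : R).
Hypothesis hg : forall k x, (k < N)%nat -> is_derive (g k) x (g (S k) x).
Hypothesis hg0 : forall x, continuity_pt (g 0%nat) x.

Definition affine_primitive_derivs (k : nat) : R -> R :=
  match k with
  | O => fun x => c * RInt (fun t => g 0%nat (a * t + b)) t0 x + d
  | S j => fun x => c * a ^ j * g j (a * x + b)
  end.

Lemma is_derive_affine_primitive_derivs k x : (k < S N)%nat ->
  is_derive (affine_primitive_derivs k) x (affine_primitive_derivs (S k) x).
Proof.
  intros Hk. assert (Hcomp : forall t, continuity_pt (fun t => g 0%nat (a * t + b)) t)
    by (intros t; apply continuity_pt_comp_affine, hg0).
  destruct k as [|k]; simpl.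
  - auto_derive; [|ring]. split; [|split; [|exact I]].
    + apply (ex_RInt_continuous (V := R_CompleteNormedModule)).
      intros t _. apply continuity_pt_filterlim, Hcomp.
    + apply filter_forall, Hcomp.
  - replace (c * (a * a ^ k)) with (c * a ^ k * a) by ring.
    apply is_derive_scal_affine, hg. lia.
Qed.

Lemma Ck_affine_primitive : (forall x, continuity_pt (g N) x) ->
  Ck (S N) (affine_primitive_derivs 0).
Proof.
  intros hgN. apply (Ck_chain _ _ is_derive_affine_primitive_derivs).
  intros x. apply continuity_pt_filterlim, (continuity_pt_scal (fun y => g N (a * y + b))).
  apply continuity_pt_comp_affine, hgN.
Qed.

Lemma Derive_n_affine_primitive k x : (k <= N)%nat ->
  Derive_n (affine_primitive_derivs 0) (S k) x = c * a ^ k * g k (a * x + b).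
Proof.
  intros Hk. now rewrite (Derive_n_chain _ _ is_derive_affine_primitive_derivs) by lia.
Qed.

End AffinePrimitive.

Lemma Rabs_affine_gt_left a b c : a <> 0 -> exists t0, forall t, t < t0 -> c < Rabs (a * t + b).
Proof.
  intros Ha. pose proof (Rabs_pos_lt a Ha) as Hpos.
  exists (- (Rabs c + Rabs b) / Rabs a). intros t Ht.
  assert (Hat : Rabs c + Rabs b < Rabs (a * t)).
  { apply (Rmult_lt_compat_l (Rabs a)) in Ht; [|exact Hpos].
    replace (Rabs a * (- (Rabs c + Rabs b) / Rabs a)) with (- (Rabs c + Rabs b)) in Ht
      by (field; lra).
    rewrite Rabs_mult.
    pose proof (Rmult_le_compat_l (Rabs a) _ _ (Rlt_le _ _ Hpos) (Rabs_maj2 t)). lra. }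
  pose proof (Rabs_triang_inv (a * t) (- b)). pose proof (Rle_abs c).
  rewrite Rabs_Ropp in *. replace (a * t - - b) with (a * t + b) in * by ring. lra.
Qed.

(* For m = 1/2 and k <= 3, [cn^(n-3) * cnpow_poly n k cn sn dn] is the k-th
   derivative of [cn^n], reduced with [sn^2 = 1 - cn^2] and [dn^2 = (1 + cn^2) / 2]. *)
Definition cnpow_poly (n : R) (k : nat) (c s d : R) : R :=
  match k with
  | O => c ^ 3
  | 1%nat => - n * c ^ 2 * s * d
  | 2%nat => n * (n - 1) / 2 * c - n * (n + 1) / 2 * c ^ 5
  | _ => - (n * (n - 1) * (n - 2) / 2 - n * (n + 1) * (n + 2) / 2 * c ^ 4) * s * d
  end.

Lemma cnpow_poly_ode n c s d : n <> 0 -> s ^ 2 * d ^ 2 = (1 - c ^ 4) / 2 ->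
  n * cnpow_poly n 3 c s d * cnpow_poly n 0 c s d ^ 2
  - 3 * n * cnpow_poly n 2 c s d * cnpow_poly n 1 c s d * cnpow_poly n 0 c s d
  + 2 * (n - 1 / n) * cnpow_poly n 1 c s d ^ 3 = 0.
Proof.
  intros Hn Hsd. unfold cnpow_poly; cbv beta iota.
  replace ((- n * c ^ 2 * s * d) ^ 3) with (- n ^ 3 * c ^ 6 * s * d * (s ^ 2 * d ^ 2)) by ring.
  rewrite Hsd. field. exact Hn.
Qed.

Section CnPower.

Variable n : R.
Hypothesis hn : 3 < n.

Local Notation K := (ellK (1 / 2)).
Local Notation cn := (jcn (1 / 2)).
Local Notation sn := (jsn (1 / 2)).
Local Notation dn := (jdn (1 / 2)).

Let hm : 0 <= 1 / 2 < 1.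
Proof. lra. Qed.

Lemma jsn2_half x : sn x ^ 2 = 1 - cn x ^ 2.
Proof. pose proof (jsn2_add_jcn2 (1 / 2) x). lra. Qed.

Lemma jdn2_half x : dn x ^ 2 = (1 + cn x ^ 2) / 2.
Proof. rewrite (jdn2 (1 / 2) hm), jsn2_half. field. Qed.

Lemma jsn2_jdn2_half x : sn x ^ 2 * dn x ^ 2 = (1 - cn x ^ 4) / 2.
Proof. rewrite jdn2_half, jsn2_half. field. Qed.

Definition cnpow_deriv (k : nat) (x : R) : R :=
  rpow (cn x) (n - 3) * cnpow_poly n k (cn x) (sn x) (dn x).

Lemma is_derive_cnpow_deriv k x : (k < 3)%nat -> - K < x < K ->
  is_derive (cnpow_deriv k) x (cnpow_deriv (S k) x).
Proof.
  intros Hk Hx. pose proof (jcn_pos _ hm x Hx) as Hc.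
  assert (HE : rpow (cn x) (n - 3) = rpow (cn x) (n - 3 - 1) * cn x).
  { replace (n - 3) with (n - 3 - 1 + INR 1) at 1 by (simpl; ring).
    rewrite rpow_add_nat. ring. }
  destruct k as [|[|[|k]]]; [| | |lia]; unfold cnpow_deriv, cnpow_poly; auto_derive.
  1, 3, 5: repeat apply conj;
    auto using ex_derive_rpow, ex_derive_jcn, ex_derive_jsn, ex_derive_jdn.
  all: rewrite (is_derive_unique (fun t : R => rpow t (n - 3)) _ _ (is_derive_rpow _ _ Hc)),
               ?(is_derive_unique (fun t : R => cn t) _ _ (is_derive_jcn _ hm x)),
               ?(is_derive_unique (fun t : R => sn t) _ _ (is_derive_jsn _ hm x)),
               ?(is_derive_unique (fun t : R => dn t) _ _ (is_derive_jdn _ hm x)), HE.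
  - ring.
  - transitivity (n * rpow (cn x) (n - 3 - 1) *
      ((n - 1) * cn x ^ 2 * (sn x ^ 2 * dn x ^ 2) - cn x ^ 4 * dn x ^ 2
       + 1 / 2 * cn x ^ 4 * sn x ^ 2)); [ring|].
    rewrite jsn2_jdn2_half, jdn2_half, jsn2_half. field.
  - field.
Qed.

Lemma continuity_pt_cnpow_deriv k x : continuity_pt (cnpow_deriv k) x.
Proof.
  change (continuity_pt (mult_fct (fun y => rpow (cn y) (n - 3))
                          (fun y => cnpow_poly n k (cn y) (sn y) (dn y))) x).
  apply continuity_pt_mult.
  - apply (continuity_pt_comp cn (fun t => rpow t (n - 3))).
    + apply (continuity_pt_of_is_derive _ _ _ (is_derive_jcn _ hm x)).
    + apply continuity_pt_rpow. lra.
  - apply continuity_pt_of_ex_derive.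
    destruct k as [|[|[|k]]]; unfold cnpow_poly; auto_derive;
      repeat apply conj; auto using ex_derive_jcn, ex_derive_jsn, ex_derive_jdn.
Qed.

Lemma cnpow_deriv_ellK k : cnpow_deriv k K = 0 /\ cnpow_deriv k (- K) = 0.
Proof.
  unfold cnpow_deriv. destruct (jcn_ellK _ hm) as [-> ->].
  rewrite rpow_nonpos by lra. split; ring.
Qed.

Definition gk (k : nat) : R -> R := zero_ext (- K) K (cnpow_deriv k).

Lemma is_derive_gk k x : (k < 3)%nat -> is_derive (gk k) x (gk (S k) x).
Proof.
  intros Hk. pose proof (ellK_pos _ hm).
  destruct (cnpow_deriv_ellK k), (cnpow_deriv_ellK (S k)).
  apply is_derive_zero_ext; auto using continuity_pt_cnpow_deriv; [lra|].
  intros y Hy. now apply is_derive_cnpow_deriv.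
Qed.

Lemma continuity_pt_gk k x : continuity_pt (gk k) x.
Proof.
  pose proof (ellK_pos _ hm). destruct (cnpow_deriv_ellK k).
  apply continuity_pt_zero_ext; auto using continuity_pt_cnpow_deriv. lra.
Qed.

Lemma gk_ode x :
  n * gk 3 x * gk 0 x ^ 2 - 3 * n * gk 2 x * gk 1 x * gk 0 x
  + 2 * (n - 1 / n) * gk 1 x ^ 3 = 0.
Proof.
  unfold gk. destruct (Rlt_dec (- K) x); [destruct (Rlt_dec x K)|].
  2, 3: rewrite !zero_ext_out by lra; ring.
  rewrite !zero_ext_in by lra. unfold cnpow_deriv.
  set (E := rpow (cn x) (n - 3)).
  set (P k := cnpow_poly n k (cn x) (sn x) (dn x)).
  transitivity (E ^ 3 * (n * P 3%nat * P 0%nat ^ 2 - 3 * n * P 2%nat * P 1%nat * P 0%nat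
                         + 2 * (n - 1 / n) * P 1%nat ^ 3)); [unfold P; field; lra|].
  unfold P. rewrite cnpow_poly_ode; [ring | lra | apply jsn2_jdn2_half].
Qed.

Lemma gk_out k x : K <= Rabs x -> gk k x = 0.
Proof.
  intros Hx. apply zero_ext_out. revert Hx. unfold Rabs. destruct (Rcase_abs x); lra.
Qed.

Lemma cnpow_deriv_0 x : cnpow_deriv 0 x = rpow (cn x) n.
Proof.
  unfold cnpow_deriv, cnpow_poly. rewrite <- rpow_add_nat. f_equal. simpl. ring.
Qed.

Lemma gfun_gk : gfun n = gk 0.
Proof.
  apply functional_extensionality. intros x. unfold gfun, gk.
  destruct (Rle_dec (Rabs x) K) as [Hx|Hx].
  - destruct (Rle_lt_or_eq_dec _ _ Hx) as [Hlt|Habs].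
    + apply Rabs_def2 in Hlt. rewrite zero_ext_in, cnpow_deriv_0 by lra. reflexivity.
    + assert (Hpm : x = K \/ x = - K) by (revert Habs; unfold Rabs; destruct (Rcase_abs x); lra).
      rewrite zero_ext_out by lra. apply rpow_nonpos.
      destruct (jcn_ellK _ hm), Hpm as [-> | ->]; lra.
  - rewrite zero_ext_out; [reflexivity|].
    revert Hx. unfold Rabs. destruct (Rcase_abs x); lra.
Qed.

End CnPower.

Theorem mainTheorem2 (n : R) (hn : 3 < n) :
  Ck 3 (gfun n) /\
  (forall x : R,
     n * Derive_n (gfun n) 3 x * (gfun n x) ^ 2
     - 3 * n * Derive_n (gfun n) 2 x * Derive_n (gfun n) 1 x * gfun n x
     + 2 * (n - 1 / n) * (Derive_n (gfun n) 1 x) ^ 3 = 0) /\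
  (forall alpha beta gamma delta : R, alpha <> 0 ->
     let Y := fun x : R =>
       gamma * RInt_gen (fun t => gfun n (alpha * t + beta))
                 (Rbar_locally m_infty) (at_point x) + delta in
     Ck 4 Y /\
     forall x : R,
       Derive_n Y 4 x * (Derive_n Y 1 x) ^ 2
       - 3 * Derive_n Y 3 x * Derive_n Y 2 x * Derive_n Y 1 x
       + 2 * (1 - / n ^ 2) * (Derive_n Y 2 x) ^ 3 = 0).
Proof.
  rewrite gfun_gk.
  assert (Hg : forall k x, (k < 3)%nat -> is_derive (gk n k) x (gk n (S k) x))
    by (intros k y Hk; now apply is_derive_gk).
  split; [|split].
  - apply (Ck_chain _ _ Hg). intros x. apply continuity_pt_filterlim, continuity_pt_gk, hn.
  - intros x. rewrite !(Derive_n_chain _ _ Hg) by lia. apply gk_ode, hn.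
  - intros alpha beta gamma delta Ha Y.
    destruct (Rabs_affine_gt_left alpha beta (ellK (1 / 2)) Ha) as [t0 Ht0].
    assert (HY : Y = affine_primitive_derivs (gk n) alpha beta gamma delta t0 0).
    { apply functional_extensionality. intros x. unfold Y. simpl.
      rewrite (RInt_gen_m_infty_of_vanishing _ t0); [reflexivity | |].
      - intros a b. apply (ex_RInt_continuous (V := R_CompleteNormedModule)). intros t _.
        apply continuity_pt_filterlim, continuity_pt_comp_affine, continuity_pt_gk, hn.
      - intros t Ht. apply gk_out. left. now apply Ht0. }
    assert (Hg0 : forall x, continuity_pt (gk n 0) x) by (intros; apply continuity_pt_gk, hn).
    rewrite HY. split.
    + apply (Ck_affine_primitive _ 3); [exact Hg | exact Hg0 | apply continuity_pt_gk, hn].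
    + intros x. rewrite !(Derive_n_affine_primitive _ 3) by (auto; lia).
      set (z := alpha * x + beta).
      transitivity (gamma ^ 3 * alpha ^ 3 / n *
        (n * gk n 3 z * gk n 0 z ^ 2 - 3 * n * gk n 2 z * gk n 1 z * gk n 0 z
         + 2 * (n - 1 / n) * gk n 1 z ^ 3)); [field; lra|].
      rewrite gk_ode by exact hn. ring.
Qed.
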